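(* Let $G$ be a group with finite symmetric generating set $S$ and Laplacian $\Delta$, let $R\ge1$, and let $x\in IG$ with $x^*=x$. Suppose $b\in\mathbb{R}G$ is supported in $B_{2R}$ and $x-b\in\Sigma^2_R IG$. Then for every $\varepsilon\ge 2^{2\lceil\log_2R\rceil}\|b\|_1$ we have $x+\varepsilon\Delta\in\Sigma^2_R IG$.
   Context: For a group $G$ with finite symmetric generating set $S$: $*$ is the linear involution of $\mathbb{R}G$ induced by $g\mapsto g^{-1}$; $IG$ is the augmentation ideal (kernel of $\sum_g c_gg\mapsto\sum_g c_g$); the Laplacian is $\Delta=|S|-\sum_{s\in S}s$; $B_R$ is the ball of radius $R$ about $1$ in the word metric; $\Sigma^2_R\mathbb{R}G$ is the set of finite sums $\sum_i\xi_i^*\xi_i$ with each $\xi_i$ supported in $B_R$, and $\Sigma^2_R IG=IG\cap\Sigma^2_R\mathbb{R}G$. For $b=\sum_g b_gg$, $\|b\|_1=\sum_g|b_g|$. *)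

From HB Require Import structures.
From mathcomp Require Import all_boot all_order all_algebra.
Set Implicit Arguments. Unset Strict Implicit. Unset Printing Implicit Defensive.
Import Order.TTheory GRing.Theory Num.Theory.

Section GroupRing.
Variables (R : rcfType) (G : groupType).

(* An element of RG is represented by a formal finite sum  sum_i c_i g_i,
   given as a list of pairs (c_i, g_i).  Two representations denote the same
   element of RG iff they have the same coefficient function. *)
Definition RG := seq (R * G).

Definition coef (x : RG) (g : G) : R := (\sum_(p <- x | p.2 == g) p.1)%R.

Definition rg_eq (x y : RG) : Prop := forall g, coef x g = coef y g.

Definition rg_of (g : G) : RG := [:: (1%R, g)].
Definition rg_add (x y : RG) : RG := x ++ y.
Definition rg_scale (c : R) (x : RG) : RG := [seq (c * p.1, p.2)%R | p <- x].
Definition rg_sub (x y : RG) : RG := rg_add x (rg_scale (-1)%R y).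
Definition rg_mul (x y : RG) : RG :=
  [seq ((p.1 * q.1)%R, (p.2 * q.2)%g) | p <- x, q <- y].
Definition rg_star (x : RG) : RG := [seq (p.1, (p.2)^-1%g) | p <- x].

Definition aug (x : RG) : R := (\sum_(p <- x) p.1)%R.
Definition in_IG (x : RG) : Prop := aug x = 0%R.

Definition l1norm (x : RG) : R :=
  (\sum_(g <- undup [seq p.2 | p <- x]) `|coef x g|)%R.

Definition supported (x : RG) (A : G -> Prop) : Prop :=
  forall g, coef x g != 0%R -> A g.

Definition word_prod (w : seq G) : G := foldr (fun a b => (a * b)%g) 1%g w.

Definition ball (S : seq G) (r : nat) (g : G) : Prop :=
  exists w : seq G, [/\ all (fun s => s \in S) w, size w <= r & g = word_prod w].

Definition symmetric_set (S : seq G) : Prop := forall s, s \in S -> (s^-1)%g \in S.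
Definition generates (S : seq G) : Prop := forall g, exists r, ball S r g.

(* Laplacian  |S| - sum_{s in S} s  (S given as a duplicate-free list) *)
Definition laplacian (S : seq G) : RG :=
  (((size S)%:R)%R, 1%g) :: [seq ((-1)%R, s) | s <- S].

Definition Sigma2 (S : seq G) (r : nat) (x : RG) : Prop :=
  exists xis : seq RG,
    (forall xi, xi \in xis -> supported xi (ball S r)) /\
    rg_eq x (flatten [seq rg_mul (rg_star xi) xi | xi <- xis]).

Definition Sigma2I (S : seq G) (r : nat) (x : RG) : Prop :=
  in_IG x /\ Sigma2 S r x.

End GroupRing.

From HB Require Import structures.
From mathcomp Require Import all_boot all_order all_algebra.
From mathcomp Require Import ring lra zify.
Import Order.TTheory GRing.Theory Num.Theory.
Set Implicit Arguments. Unset Strict Implicit. Unset Printing Implicit Defensive.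
Local Open Scope ring_scope.

(* Write X_g = [elem_lap g] = (1 - g)^* (1 - g) = 2 - g - g^-1, so that
   Delta = 1/2 sum_(s in S) X_s.
   For h, k in B_r the square of h^-1 - k is X_(hk), and the square of h^-1 - 2 + k is
   2 X_h + 2 X_k - X_(hk); halving words therefore gives 4^(m+1) Delta - X_g in
   Sigma^2_r for g in B_(2r) when r <= 2^m, the base case g in B_2 costing only 4 Delta.
   Since x^* = x and x - b is a sum of squares, b is self-adjoint with augmentation 0,
   hence b = -1/2 sum_g b_g X_g.  The terms with b_g <= 0 are squares, and those with
   b_g > 0 are absorbed by (b_g / 2) 4^(m+1) Delta; as the positive coefficients of b
   add up to ||b||_1 / 2, this costs at most 4^m ||b||_1 Delta. *)

Section Coefficients.
Variables (R : rcfType) (G : groupType).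
Implicit Types (x y : RG R G) (g u : G).

Definition kdelta g u : R := (g == u)%:R.

Definition rg_supp x : seq G := undup [seq p.2 | p <- x].

Definition hsq x : RG R G := rg_mul (rg_star x) x.

Lemma kdeltaV g u : kdelta (g^-1)%g u = kdelta g (u^-1)%g.
Proof. by rewrite /kdelta -{1}(invgK u) (inj_eq (@invg_inj _)). Qed.

Lemma coef_sumE x u : coef x u = \sum_(p <- x) p.1 * kdelta p.2 u.
Proof.
rewrite /coef big_mkcond; apply: eq_bigr => p _.
by rewrite /kdelta; case: eqP => _; rewrite ?mulr1 ?mulr0.
Qed.

Lemma coef_cat x y u : coef (x ++ y) u = coef x u + coef y u.
Proof. by rewrite /coef big_cat. Qed.

Lemma coef_nil u : coef ([::] : RG R G) u = 0.
Proof. by rewrite /coef big_nil. Qed.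

Lemma coef_scale c x u : coef (rg_scale c x) u = c * coef x u.
Proof.
by rewrite !coef_sumE big_map mulr_sumr; apply: eq_bigr => p _; rewrite mulrA.
Qed.

Lemma coef_sub x y u : coef (rg_sub x y) u = coef x u - coef y u.
Proof. by rewrite coef_cat coef_scale mulN1r. Qed.

Lemma coef_star x u : coef (rg_star x) u = coef x (u^-1)%g.
Proof.
by rewrite !coef_sumE big_map; apply: eq_bigr => p _; rewrite kdeltaV.
Qed.

Lemma coef_flatten (s : seq (RG R G)) u :
  coef (flatten s) u = \sum_(y <- s) coef y u.
Proof.
elim: s => [|y s IH]; first by rewrite big_nil coef_nil.
by rewrite /= coef_cat IH big_cons.
Qed.

Lemma coef_mul x y u :
  coef (rg_mul x y) u = \sum_(p <- x) \sum_(q <- y) p.1 * q.1 * kdelta (p.2 * q.2)%g u.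
Proof.
rewrite coef_sumE; elim: x => [|p x IH]; first by rewrite !big_nil.
by rewrite /= big_cat big_cons big_map IH.
Qed.

Lemma coef_hsq x u :
  coef (hsq x) u = \sum_(p <- x) \sum_(q <- x) p.1 * q.1 * kdelta (p.2^-1 * q.2)%g u.
Proof. by rewrite coef_mul big_map. Qed.

Lemma coef_hsqZ c x u : coef (hsq (rg_scale c x)) u = c ^+ 2 * coef (hsq x) u.
Proof.
rewrite !coef_hsq big_map mulr_sumr; apply: eq_bigr => p _.
rewrite big_map mulr_sumr; apply: eq_bigr => q _ /=; ring.
Qed.

Lemma coef_hsqV x u : coef (hsq x) (u^-1)%g = coef (hsq x) u.
Proof.
rewrite !coef_hsq exchange_big; apply: eq_bigr => p _; apply: eq_bigr => q _.
by rewrite -kdeltaV invgM invgK [q.1 * _]mulrC.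
Qed.

Lemma big_coef x (B : seq G) (F : G -> R) :
  uniq B -> {subset [seq p.2 | p <- x] <= B} ->
  \sum_(p <- x) p.1 * F p.2 = \sum_(g <- B) coef x g * F g.
Proof.
move=> uB; elim: x => [|p x IH] /= xB.
  by rewrite big_nil; symmetry; apply: big1 => g _; rewrite coef_nil mul0r.
have pB : p.2 \in B by apply: xB; rewrite inE eqxx.
have sum_kdelta : \sum_(g <- B) kdelta p.2 g * F g = F p.2.
  rewrite (bigD1_seq p.2) //= /kdelta eqxx mul1r big1 ?addr0 // => g.
  by rewrite eq_sym => /negPf ->; rewrite mul0r.
rewrite big_cons IH => [|g gx]; last by apply: xB; rewrite inE gx orbT.
under [RHS]eq_bigr do rewrite coef_sumE big_cons -coef_sumE mulrDl -mulrA.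
by rewrite big_split /= -mulr_sumr sum_kdelta.
Qed.

Lemma coef_supp x u : coef x u = \sum_(g <- rg_supp x) coef x g * kdelta g u.
Proof.
by rewrite {1}coef_sumE; apply: big_coef => [|g]; rewrite ?undup_uniq ?mem_undup.
Qed.

Lemma aug_supp x : aug x = \sum_(g <- rg_supp x) coef x g.
Proof.
under [RHS]eq_bigr do rewrite -[coef _ _]mulr1.
rewrite -big_coef ?undup_uniq //; first by apply: eq_bigr => p _; rewrite mulr1.
by move=> g; rewrite mem_undup.
Qed.

Lemma supportedP x (A : G -> Prop) :
  (forall p, p \in x -> A p.2) -> supported x A.
Proof.
move=> xA u coef_neq0.
have /hasP [p px /eqP <-] : has (fun p => p.2 == u) x; last exact: xA.
apply: contraNT coef_neq0 => /(big_hasC 0 +%R (fun p : R * G => p.1)) sum0.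
by rewrite /coef sum0.
Qed.

Lemma aug_cat x y : aug (x ++ y) = aug x + aug y.
Proof. by rewrite /aug big_cat. Qed.

Lemma aug_scale c x : aug (rg_scale c x) = c * aug x.
Proof. by rewrite /aug big_map mulr_sumr. Qed.

Lemma aug_sub x y : aug (rg_sub x y) = aug x - aug y.
Proof. by rewrite aug_cat aug_scale mulN1r. Qed.

Lemma pos_coef_sum_le_l1norm (b : RG R G) : aug b = 0 ->
  2 * \sum_(g <- rg_supp b | 0 < coef b g) coef b g <= l1norm b.
Proof.
move=> b_aug; set P := \sum_(g <- _ | _) _.
have P_ge0 : 0 <= P by rewrite /P big_seq_cond sumr_ge0 // => g /andP [_ /ltW].
have neg_sum : \sum_(g <- rg_supp b | ~~ (0 < coef b g)) coef b g = - P.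
  by have := aug_supp b; rewrite b_aug (bigID (fun g => 0 < coef b g)) /= -/P; lra.
have pos_norm : \sum_(g <- rg_supp b | 0 < coef b g) `|coef b g| = P.
  by apply: eq_bigr => g /gtr0_norm.
have := ler_norm_sum (rg_supp b) (coef b) (fun g => ~~ (0 < coef b g)).
rewrite neg_sum normrN ger0_norm // => neg_norm.
rewrite /l1norm -/(rg_supp b) (bigID (fun g => 0 < coef b g)) /= pos_norm; lra.
Qed.

End Coefficients.
Arguments kdelta {R G}.

Section Balls.
Variables (G : groupType) (S : seq G).
Implicit Types (g h k : G) (w : seq G).

Lemma word_prod_cat w1 w2 : word_prod (w1 ++ w2) = (word_prod w1 * word_prod w2)%g.
Proof. by elim: w1 => [|a w IH] /=; rewrite ?mul1g // IH mulgA. Qed.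

Lemma ballW n m g : (n <= m)%N -> ball S n g -> ball S m g.
Proof. by move=> le_nm [w [wS le_wn ->]]; exists w; split=> //; apply: leq_trans le_nm. Qed.

Lemma ball1 n : ball S n 1%g.
Proof. by exists [::]. Qed.

Lemma ball_gen n s : s \in S -> (1 <= n)%N -> ball S n s.
Proof. by move=> sS n_gt0; exists [:: s]; rewrite /= sS mulg1. Qed.

Lemma ball_split n m g : ball S (n + m) g ->
  exists h k, [/\ ball S n h, ball S m k & g = (h * k)%g].
Proof.
move=> [w [/allP wS le_w ->]]; exists (word_prod (take n w)), (word_prod (drop n w)).
split; last by rewrite -word_prod_cat cat_take_drop.
- exists (take n w); split=> //; last by rewrite size_take_min geq_minl.
  by apply/allP => a /mem_take; apply: wS.
- exists (drop n w); split=> //; last by rewrite size_drop leq_subLR.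
  by apply/allP => a /mem_drop; apply: wS.
Qed.

Hypothesis S_sym : symmetric_set S.

Lemma ballV n g : ball S n g -> ball S n (g^-1)%g.
Proof.
move=> [w [/allP wS le_w ->]]; exists (rev [seq (a^-1)%g | a <- w]); split.
- by apply/allP => a; rewrite mem_rev => /mapP [c /wS cS ->]; apply: S_sym.
- by rewrite size_rev size_map.
elim: w {wS le_w} => [|a w IH] /=; first by rewrite invg1.
by rewrite rev_cons -cats1 word_prod_cat -IH /= mulg1 invgM.
Qed.

End Balls.

Section SumsOfSquares.
Variables (R : rcfType) (G : groupType) (S : seq G) (r : nat).
Implicit Types (x xi : RG R G) (g u : G) (f : G -> R).

Definition sos f := exists xis : seq (RG R G),
  (forall xi, xi \in xis -> supported xi (ball S r)) /\
  forall u, f u = coef (flatten [seq hsq xi | xi <- xis]) u.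

Lemma Sigma2E x : Sigma2 S r x = sos (coef x).
Proof. by []. Qed.

Lemma sos_ext f f' : f =1 f' -> sos f -> sos f'.
Proof. by move=> ff' [xis [xisS fE]]; exists xis; split=> // u; rewrite -ff'. Qed.

Lemma sos0 : sos (fun=> 0).
Proof. by exists [::]; split=> // u; rewrite coef_nil. Qed.

Lemma sosD f f' : sos f -> sos f' -> sos (fun u => f u + f' u).
Proof.
move=> [xs [xsS fE]] [ys [ysS f'E]]; exists (xs ++ ys); split.
  by move=> xi; rewrite mem_cat => /orP[]; [apply: xsS | apply: ysS].
by move=> u; rewrite map_cat flatten_cat coef_cat fE f'E.
Qed.

Lemma sosZ c f : 0 <= c -> sos f -> sos (fun u => c * f u).
Proof.
move=> c_ge0 [xs [xsS fE]]; exists [seq rg_scale (Num.sqrt c) xi | xi <- xs]; split.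
  move=> _ /mapP [xi xi_xs ->] u; rewrite coef_scale => coef_neq0.
  by apply: (xsS xi xi_xs); apply: contraNneq coef_neq0 => ->; rewrite mulr0.
move=> u; rewrite fE !coef_flatten !big_map mulr_sumr; apply: eq_bigr => xi _.
by rewrite coef_hsqZ sqr_sqrtr.
Qed.

Lemma sos_hsq xi : supported xi (ball S r) -> sos (coef (hsq xi)).
Proof. by move=> xiS; exists [:: xi]; split=> [_ /[!inE] /eqP ->|u] //=; rewrite cats0. Qed.

Lemma sos_sum (I : eqType) (s : seq I) (P : pred I) (F : I -> G -> R) :
  (forall i, i \in s -> P i -> sos (F i)) -> sos (fun u => \sum_(i <- s | P i) F i u).
Proof.
elim: s => [|i s IH] sosF; first by apply: sos_ext sos0 => u; rewrite big_nil.
have {}IH : sos (fun u => \sum_(j <- s | P j) F j u).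
  by apply: IH => j js; apply: sosF; rewrite inE js orbT.
case Pi: (P i); last by apply: sos_ext IH => u; rewrite big_cons Pi.
by apply: sos_ext (sosD (sosF i (mem_head _ _) Pi) IH) => u; rewrite big_cons Pi.
Qed.

Lemma sosV f u : sos f -> f (u^-1)%g = f u.
Proof.
move=> [xs [_ fE]]; rewrite !fE !coef_flatten !big_map.
by apply: eq_bigr => xi _; rewrite coef_hsqV.
Qed.

End SumsOfSquares.

Section Laplacian.
Variables (R : rcfType) (G : groupType) (S : seq G) (r : nat).
Hypotheses (S_uniq : uniq S) (S_sym : symmetric_set S).
Implicit Types (g h k u : G) (T : seq G).

Definition elem_lap g u : R := 2 * kdelta 1%g u - kdelta g u - kdelta (g^-1)%g u.

Definition lap_coef u : R := coef (laplacian R S) u.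

Lemma elem_lapV g u : elem_lap (g^-1)%g u = elem_lap g u.
Proof. by rewrite /elem_lap invgK addrAC. Qed.

Lemma elem_lap1 u : elem_lap 1%g u = 0.
Proof. rewrite /elem_lap invg1; ring. Qed.

Lemma coef_hsq_elem_lap h k :
  coef (hsq [:: (1, (h^-1)%g); (-1, k)]) =1 elem_lap (h * k).
Proof.
move=> u; rewrite coef_hsq !big_cons !big_nil /= /elem_lap !invgK invgM mulgV mulVg.
ring.
Qed.

Lemma lap_coefE u : lap_coef u = (size S)%:R * kdelta 1%g u - \sum_(s <- S) kdelta s u.
Proof.
rewrite /lap_coef coef_sumE big_cons big_map /= -sumrN.
by congr (_ + _); apply: eq_bigr => s _; rewrite mulN1r.
Qed.

Lemma sum_elem_lap u : \sum_(s <- S) elem_lap s u = 2 * lap_coef u.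
Proof.
have invS : perm_eq [seq (s^-1)%g | s <- S] S.
  apply: uniq_perm => //; first by rewrite (map_inj_uniq invg_inj).
  move=> s; apply/mapP/idP => [[t tS ->]|sS]; first exact: S_sym.
  by exists (s^-1)%g; rewrite ?invgK //; apply: S_sym.
rewrite /elem_lap !sumrB lap_coefE big_const_seq count_predT iter_addr addr0.
have -> : \sum_(s <- S) kdelta (s^-1)%g u = \sum_(s <- S) kdelta s u :> R.
  by rewrite -[RHS](perm_big _ invS) big_map.
rewrite -mulr_natl; ring.
Qed.

Lemma aug_laplacian : aug (laplacian R S) = 0.
Proof.
rewrite /aug big_cons big_map big_const_seq count_predT iter_addr addr0 /=.
by rewrite mulNrn subrr.
Qed.

Lemma sos_elem_lap_mul h k : ball S r h -> ball S r k -> sos S r (elem_lap (h * k)).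
Proof.
move=> hB kB; apply: sos_ext (sos_hsq _) => [u|]; first exact: coef_hsq_elem_lap.
by apply: supportedP => p; rewrite !inE => /orP[] /eqP -> //=; apply: ballV.
Qed.

Lemma sos_elem_lap g : ball S r g -> sos S r (elem_lap g).
Proof. by move=> gB; rewrite -[g]mul1g; apply: sos_elem_lap_mul => //; apply: ball1. Qed.

Lemma sos_elem_lap_ball2 g : ball S (2 * r) g -> sos S r (elem_lap g).
Proof. by rewrite mul2n -addnn => /ball_split [h [k [hB kB ->]]]; apply: sos_elem_lap_mul. Qed.

Lemma sos_elem_lap_tri h k : ball S r h -> ball S r k ->
  sos S r (fun u => 2 * elem_lap h u + 2 * elem_lap k u - elem_lap (h * k) u).
Proof.
move=> hB kB; apply: sos_ext (sos_hsq (xi := [:: (1, (h^-1)%g); (-2, 1%g); (1, k)]) _).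
  move=> u; rewrite coef_hsq !big_cons !big_nil /= /elem_lap.
  rewrite !invgK invg1 invgM mulgV mulVg !mul1g !mulg1; ring.
by apply: supportedP => p; rewrite !inE => /or3P[] /eqP -> //=; [apply: ballV | apply: ball1].
Qed.

Hypothesis r_gt0 : (0 < r)%N.

Lemma sos_lapB_sum T : uniq T -> {subset T <= S} ->
  sos S r (fun u => 2 * lap_coef u - \sum_(t <- T) elem_lap t u).
Proof.
move=> T_uniq TS.
have ST : perm_eq [seq s <- S | s \in T] T.
  apply: uniq_perm; rewrite ?filter_uniq // => s; rewrite mem_filter.
  by apply/andP/idP => [[]//|sT]; split=> //; apply: TS.
have sos_rest : sos S r (fun u => \sum_(s <- S | s \notin T) elem_lap s u).
  by apply: sos_sum => s sS _; apply: sos_elem_lap; apply: ball_gen.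
apply: sos_ext sos_rest => u.
rewrite -sum_elem_lap [in RHS](bigID (mem T)) /= -[\sum_(i <- S | i \in T) _]big_filter.
by rewrite (perm_big _ ST) addrC addrK.
Qed.

Lemma sos_lap : sos S r lap_coef.
Proof.
have half_ge0 : 0 <= 2^-1 :> R by rewrite invr_ge0.
apply: sos_ext (sosZ half_ge0 (sos_lapB_sum (T := [::]) _ _)) => // u.
by rewrite big_nil subr0 mulrA mulVf ?mul1r // pnatr_eq0.
Qed.

Lemma sos_lapB_elem a : a \in S -> sos S r (fun u => 2 * lap_coef u - elem_lap a u).
Proof.
move=> aS; apply: sos_ext (sos_lapB_sum (T := [:: a]) _ _) => [u||b] //.
  by rewrite big_seq1.
by rewrite inE => /eqP ->.
Qed.

Lemma sos_lapB_elem2 a b : a \in S -> b \in S -> a != b ->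
  sos S r (fun u => 2 * lap_coef u - elem_lap a u - elem_lap b u).
Proof.
move=> aS bS ab; apply: sos_ext (sos_lapB_sum (T := [:: a; b]) _ _) => [u||c].
- by rewrite big_cons big_seq1 opprD addrA.
- by rewrite /= inE ab.
- by rewrite !inE => /orP[] /eqP ->.
Qed.

Lemma sos_lapB_elem_ball2 c g : 4 <= c -> ball S 2 g ->
  sos S r (fun u => c * lap_coef u - elem_lap g u).
Proof.
move=> c_ge4 gB; have c4_ge0 : 0 <= c - 4 by rewrite subr_ge0.
suff sos4 : sos S r (fun u => 4 * lap_coef u - elem_lap g u).
  by apply: sos_ext (sosD (sosZ c4_ge0 sos_lap) sos4) => u; ring.
have sos4_1 : sos S r (fun u => 4 * lap_coef u - elem_lap 1%g u).
  by apply: sos_ext (sosZ (ler0n _ 4) sos_lap) => u; rewrite elem_lap1 subr0.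
case: gB => -[|a [|b [|? ?]]] [//= wS _ ->]; rewrite ?mulg1 //.
  move: wS; rewrite andbT => aS.
  by apply: sos_ext (sosD (sosZ (ler0n _ 2) sos_lap) (sos_lapB_elem aS)) => u; ring.
move: wS; rewrite andbT => /andP [aS bS].
have [ab1|ab_neq1] := eqVneq (a * b)%g 1%g; first by rewrite ab1.
have sos_ab : sos S r (fun u => 2 * lap_coef u - elem_lap a u - elem_lap b u).
  have [eq_ab|] := eqVneq a b; last exact: sos_lapB_elem2.
  subst b.
  have aVa : a != (a^-1)%g by apply: contraNneq ab_neq1 => {2}->; rewrite mulgV.
  apply: sos_ext (sos_lapB_elem2 aS (S_sym aS) aVa) => u; by rewrite elem_lapV.
have tri := sos_elem_lap_tri (ball_gen aS r_gt0) (ball_gen bS r_gt0).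
by apply: sos_ext (sosD (sosZ (ler0n _ 2) sos_ab) tri) => u; ring.
Qed.

Lemma sos_lapB_elem_ball m n g : (0 < n)%N -> (n <= r)%N -> (n <= 2 ^ m)%N ->
  ball S (2 * n) g -> sos S r (fun u => 4 ^+ m.+1 * lap_coef u - elem_lap g u).
Proof.
have base j h : ball S 2 h -> sos S r (fun u => 4 ^+ j.+1 * lap_coef u - elem_lap h u).
  by apply: sos_lapB_elem_ball2; rewrite exprS ler_pMr ?exprn_ege1 ?ler1n ?ltr0n.
elim: m n g => [|m IH] n g n_gt0 n_le_r n_le_2m gB.
  by rewrite expn0 in n_le_2m; apply: base; apply: ballW gB; lia.
have [n_le1|n_gt1] := leqP n 1.
  by apply: base; apply: ballW gB; lia.
move: gB; rewrite mul2n -addnn => /ball_split [h [k [hB kB ->]]].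
pose n' := (n - n %/ 2)%N. (* = ceil(n / 2) *)
have [n'_gt0 n'_le_r n'_le_2m n_le_2n'] :
    [/\ 0 < n', n' <= r, n' <= 2 ^ m & n <= 2 * n']%N.
  by rewrite /n'; move: n_le_2m; rewrite expnS => ?; split; lia.
have IHh := IH n' h n'_gt0 n'_le_r n'_le_2m (ballW n_le_2n' hB).
have IHk := IH n' k n'_gt0 n'_le_r n'_le_2m (ballW n_le_2n' kB).
have tri := sos_elem_lap_tri (ballW n_le_r hB) (ballW n_le_r kB).
apply: sos_ext (sosD (sosD (sosZ (ler0n _ 2) IHh) (sosZ (ler0n _ 2) IHk)) tri).
by move=> u; rewrite [4 ^+ m.+2]exprS; ring.
Qed.

Lemma sum_coef_elem_lap (b : RG R G) u :
  aug b = 0 -> (forall v, coef b (v^-1)%g = coef b v) ->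
  \sum_(g <- rg_supp b) coef b g * elem_lap g u = - 2 * coef b u.
Proof.
move=> b_aug b_sym; rewrite /elem_lap.
under eq_bigr do rewrite kdeltaV mulrBr mulrBr [coef b _ * (2 * _)]mulrCA.
by rewrite !sumrB -mulr_sumr -mulr_suml -aug_supp b_aug -!coef_supp b_sym; ring.
Qed.

Lemma sos_coef_addZ_lap (b : RG R G) (eps : R) :
  aug b = 0 -> (forall u, coef b (u^-1)%g = coef b u) -> supported b (ball S (2 * r)) ->
  2%:R ^+ (2 * up_log 2 r) * l1norm b <= eps ->
  sos S r (fun u => coef b u + eps * lap_coef u).
Proof.
move=> b_aug b_sym b_supp eps_ge.
pose L := up_log 2 r; pose C : R := 4 ^+ L.+1.
pose pos g := 0 < coef b g.
pose P := \sum_(g <- rg_supp b | pos g) coef b g.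
have sos_pos g : g \in rg_supp b -> pos g ->
    sos S r (fun u => coef b g / 2 * (C * lap_coef u - elem_lap g u)).
  move=> _ bg_gt0; apply: sosZ; first by rewrite divr_ge0 ?ltW.
  apply: (sos_lapB_elem_ball r_gt0 (leqnn r) (up_logP r _)) => //.
  by apply: b_supp; rewrite gt_eqF.
have sos_neg g : g \in rg_supp b -> ~~ pos g ->
    sos S r (fun u => - coef b g / 2 * elem_lap g u).
  rewrite /pos -leNgt => _ bg_le0.
  have [bg0|bg_neq0] := eqVneq (coef b g) 0.
    by apply: sos_ext (sos0 R S r) => u; rewrite bg0 oppr0 !mul0r.
  apply: sosZ; first by rewrite divr_ge0 // oppr_ge0.
  exact: sos_elem_lap_ball2 (b_supp g bg_neq0).
have sos_rest : sos S r (fun u => (eps - C * P / 2) * lap_coef u).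
  apply: sosZ sos_lap; rewrite subr_ge0.
  have -> : C * P / 2 = 4 ^+ L * (2 * P) by rewrite /C exprS; field.
  apply: le_trans eps_ge; rewrite exprM expr2 -natrM.
  by apply: ler_wpM2l; [rewrite exprn_ge0 | apply: pos_coef_sum_le_l1norm].
apply: sos_ext (sosD (sosD (sos_sum sos_pos) (sos_sum sos_neg)) sos_rest) => u.
have sum_pos : \sum_(g <- rg_supp b | pos g) coef b g / 2 * (C * lap_coef u - elem_lap g u)
    = P * C * lap_coef u / 2 - 2^-1 * \sum_(g <- rg_supp b | pos g) coef b g * elem_lap g u.
  by rewrite /P !mulr_suml [2^-1 * _]mulr_sumr -sumrB; apply: eq_bigr => g _; ring.
have sum_neg : \sum_(g <- rg_supp b | ~~ pos g) - coef b g / 2 * elem_lap g u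
    = - 2^-1 * \sum_(g <- rg_supp b | ~~ pos g) coef b g * elem_lap g u.
  by rewrite mulr_sumr; apply: eq_bigr => g _; ring.
have := sum_coef_elem_lap u b_aug b_sym; rewrite (bigID pos) /= => sum_all.
have -> : coef b u = - 2^-1 * (- 2 * coef b u) by field.
by rewrite -sum_all sum_pos sum_neg; ring.
Qed.

End Laplacian.

Theorem lemma4p10 (R : rcfType) (G : groupType) (S : seq G)
  (S_uniq : uniq S) (S_sym : symmetric_set S) (S_gen : generates S)
  (r : nat) (r_ge1 : (1 <= r)%N)
  (x : RG R G) (x_IG : in_IG x) (x_selfadj : rg_eq (rg_star x) x)
  (b : RG R G) (b_supp : supported b (ball S (2 * r)))
  (hxb : Sigma2I S r (rg_sub x b))
  (eps : R) (heps : (2%:R ^+ (2 * up_log 2 r) * l1norm b <= eps)%R) :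
  Sigma2I S r (rg_add x (rg_scale eps (laplacian R S))).
Proof.
have [xb_aug] := hxb; rewrite Sigma2E => xb_sos.
have b_aug : aug b = 0.
  by move: xb_aug; rewrite /in_IG aug_sub x_IG sub0r => /eqP; rewrite oppr_eq0 => /eqP.
have x_sym u : coef x (u^-1)%g = coef x u by rewrite -coef_star x_selfadj.
have b_sym u : coef b (u^-1)%g = coef b u.
  by move: (sosV u xb_sos); rewrite !coef_sub x_sym => /addrI /oppr_inj.
split; first by rewrite /in_IG aug_cat aug_scale aug_laplacian x_IG mulr0 addr0.
rewrite Sigma2E; have := sos_coef_addZ_lap S_uniq S_sym r_ge1 b_aug b_sym b_supp heps.
move=> /(sosD xb_sos); apply: sos_ext => u.
by rewrite coef_sub coef_cat coef_scale addrA subrK.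
Qed.
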